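(* Let $V$ be a finite set, $\mathcal{F}\subseteq 2^V$ a minimal hereditary family with $\delta(\mathcal{F})\ge 12$, and $x\in V$ with $f_3(x)=0$. Then $u(x)\ge 5.3$. Moreover, $u(x)=5.3$ if and only if $f_1(x)=5$, $f_2(x)=6$, and $\omega(x,F\cup\{x\})=\frac{6}{20}$ for every $F\in\mathcal{F}(x)$ with $|F|=2$.
   Context: Let $V$ be a finite set. A family $\mathcal{F}\subseteq 2^V$ is hereditary if $F'\subseteq F\in\mathcal{F}$ implies $F'\in\mathcal{F}$. For $x\in V$: the link is $\mathcal{F}(x)=\{F\setminus\{x\}: x\in F\in\mathcal{F}\}$, $d_{\mathcal{F}}(x)=|\mathcal{F}(x)|$, $\delta(\mathcal{F})=\min_{x\in V}d_{\mathcal{F}}(x)$. For $A\subseteq V$, $d_{\mathcal{F}}(A)=|\{F\in\mathcal{F}: A\subseteq F\}|$. A set $F\in\mathcal{F}$ is maximal if no other member strictly contains it; a hereditary $\mathcal{F}$ with $\delta(\mathcal{F})\ge 12$ is minimal if $\delta(\mathcal{F}\setminus\{F\})\le 11$ for every maximal $F\in\mathcal{F}$. $f_i(x)$ denotes the number of $i$-element sets in $\mathcal{F}(x)$. Weights: for $x\in F\in\mathcal{F}$ define $\omega(x,F)$ as follows. If $|F|\ne 3$, $\omega(x,F)=1/|F|$. If $|F|=3$: if $F$ is contained in some 4-element member of $\mathcal{F}$, every element of $F$ gets $\omega=1/3$; otherwise order the three 2-subsets of $F$ as $e_1,e_2,e_3$ with $d_{\mathcal{F}}(e_1)\le d_{\mathcal{F}}(e_2)\le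 d_{\mathcal{F}}(e_3)$; if $d_{\mathcal{F}}(e_2)\le 4<d_{\mathcal{F}}(e_3)$, the two elements of $e_3$ get $\omega=7/20$ and the element of $F\setminus e_3$ gets $6/20$; else if $d_{\mathcal{F}}(e_1)\le 4<d_{\mathcal{F}}(e_2)$, the two elements of $e_1$ get $7/20$ and the element of $F\setminus e_1$ gets $6/20$; otherwise every element of $F$ gets $1/3$. The weight of $x$ is $u(x)=\sum_{x\in F\in\mathcal{F}}\omega(x,F)$. *)

From mathcomp Require Import all_boot all_order all_algebra.
Set Implicit Arguments. Unset Strict Implicit. Unset Printing Implicit Defensive.
Import Order.TTheory GRing.Theory Num.Theory.

Local Open Scope ring_scope.
Section Defs.
Variable V : finType.
Implicit Types (F : {set {set V}}) (A B : {set V}) (x y : V).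

Definition hereditary F : Prop :=
  forall A B, B \subset A -> A \in F -> B \in F.

Definition link F x : {set {set V}} := [set A :\ x | A in [set A in F | x \in A]].

Definition degv F x : nat := #|link F x|.

Definition degs F A : nat := #|[set B in F | A \subset B]|.

Definition delta_ge F (k : nat) : Prop := forall y, (k <= degv F y)%N.

Definition maximal_in F A : bool :=
  (A \in F) && [forall B in F, (A \subset B) ==> (B == A)].

Definition minimal12 F : Prop :=
  delta_ge F 12 /\
  forall A, maximal_in F A -> exists y, (degv (F :\ A) y <= 11)%N.

Definition fcount F x (i : nat) : nat := #|[set A in link F x | #|A| == i]|.

Definition pairs A : {set {set V}} := [set e in powerset A | #|e| == 2%N].

(* For |A| = 3 and A
   not in a 4-element member: with e1,e2,e3 the 2-subsets ordered by d_F,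
   "d(e2) <= 4 < d(e3)" means exactly one 2-subset (e3) has d_F > 4, and
   "d(e1) <= 4 < d(e2)" (with the first case failing) means exactly two have d_F > 4
   (e1 being the unique one with d_F <= 4). *)
Definition omega F x A : rat :=
  if #|A| != 3%N then (#|A|%:R)^-1
  else if [exists B in F, (#|B| == 4%N) && (A \subset B)] then 3%:R^-1
  else
    let high := [set e in pairs A | (4 < degs F e)%N] in
    let low  := [set e in pairs A | (degs F e <= 4)%N] in
    if #|high| == 1%N then
      (if [exists e in high, x \in e] then (7%:R / 20%:R) else (6%:R / 20%:R))
    else if #|high| == 2%N then
      (if [exists e in low, x \in e] then (7%:R / 20%:R) else (6%:R / 20%:R))
    else 3%:R^-1.

Definition uweight F x : rat := \sum_(A in F | x \in A) omega F x A.

End Defs.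

(* The link of x is a hereditary family of sets of size at most 2, so it consists of the
   empty set, f_1 singletons and f_2 pairs, each pair made of two of the singletons.
   The corresponding members of F have weights 1, 1/2 and at least 6/20, hence
   u(x) >= 1 + f_1/2 + 3 f_2/10 = 7/10 + f_1/5 + 3 d(x)/10.  Since d(x) = 1 + f_1 + f_2 >= 12
   and f_2 <= C(f_1, 2), we get f_1 >= 5, and both estimates are tight exactly in the
   stated case. *)

From mathcomp Require Import all_boot all_order all_algebra.
From mathcomp Require Import lra zify.
Import Order.TTheory GRing.Theory Num.Theory.
Local Open Scope ring_scope.
Set Implicit Arguments. Unset Strict Implicit.

Lemma partition_big_card (R : nmodType) (T : finType) (L : {set {set T}}) (k : nat)
    (h : {set T} -> R) :
  {in L, forall B : {set T}, #|B| <= k}%N ->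
  \sum_(B in L) h B = \sum_(i < k.+1) \sum_(B in [set A in L | #|A| == i]) h B.
Proof.
move=> Lk.
rewrite (partition_big (P := mem L) (fun B => inord #|B| : 'I_k.+1) xpredT) //=.
apply: eq_bigr => i _; apply: eq_bigl => B; rewrite inE.
case BL: (B \in L) => //=.
by rewrite -(inj_eq val_inj) /= inordK // ltnS Lk.
Qed.

Section SumBoundedBelow.
Variables (R : numDomainType) (I : finType) (A : {pred I}) (c : R) (h : I -> R).
Hypothesis c_le_h : {in A, forall i, c <= h i}.

Lemma ler_sum_const : c *+ #|A| <= \sum_(i in A) h i.
Proof. by rewrite -sumr_const; apply: ler_sum. Qed.

Lemma sum_eq_const : \sum_(i in A) h i = c *+ #|A| -> {in A, forall i, h i = c}.
Proof.
rewrite -sumr_const => /eqP; rewrite -subr_eq0 -sumrB => /eqP.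
have h_ge : forall i, i \in A -> 0 <= h i - c by move=> i /c_le_h; rewrite subr_ge0.
by move=> /(psumr_eq0P h_ge) eq0 i /eq0 /eqP; rewrite subr_eq0 => /eqP.
Qed.

End SumBoundedBelow.

Section Link.
Variables (V : finType) (F : {set {set V}}) (x : V).

Lemma mem_link (B : {set V}) : (B \in link F x) = (x \notin B) && (x |: B \in F).
Proof.
apply/imsetP/andP.
- case=> A; rewrite inE => /andP[AF xA] ->.
  by rewrite setD11 setD1K.
- case=> xB xBF; exists (x |: B); last by rewrite setU1K.
  by rewrite inE xBF setU11.
Qed.

Lemma uweight_link : uweight F x = \sum_(B in link F x) omega F x (x |: B).
Proof.
rewrite /uweight /link big_imset /=.
- apply: eq_big => A; first by rewrite inE.
  by move=> /andP[_ xA]; rewrite setD1K.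
- move=> A1 A2; rewrite !inE => /andP[_ x1] /andP[_ x2] e.
  by rewrite -(setD1K x1) -(setD1K x2) e.
Qed.

Lemma omega_card_neq3 (A : {set V}) : #|A| != 3%N -> omega F x A = #|A|%:R^-1.
Proof. by move=> A3; rewrite /omega A3. Qed.

Lemma omega_card3_ge (A : {set V}) : #|A| = 3%N -> 6%:R / 20%:R <= omega F x A.
Proof.
move=> A3; rewrite /omega A3 eqxx /=.
by repeat case: ifP => _; lra.
Qed.

Lemma card_setU1_link (B : {set V}) : B \in link F x -> #|x |: B| = #|B|.+1.
Proof. by rewrite mem_link cardsU1 => /andP[/negPf ->]. Qed.

Lemma omega_link_small (B : {set V}) :
  B \in link F x -> (#|B| < 2)%N -> omega F x (x |: B) = (#|B|.+1)%:R^-1.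
Proof.
move=> /card_setU1_link cardxB B2.
by rewrite omega_card_neq3 cardxB // eqSS; apply: contraTneq B2 => ->.
Qed.

Lemma omega_link_pair_ge (B : {set V}) :
  B \in link F x -> #|B| = 2%N -> 6%:R / 20%:R <= omega F x (x |: B).
Proof. by move=> /card_setU1_link cardxB B2; apply: omega_card3_ge; rewrite cardxB B2. Qed.

Hypothesis hF : hereditary F.

Lemma link_hereditary : hereditary (link F x).
Proof.
move=> B C CB; rewrite !mem_link => /andP[xB xBF]; apply/andP; split.
- by apply: contra xB; apply: (subsetP CB).
- by apply: hF xBF; apply: setUS.
Qed.

Lemma fcount0_link : (0 < #|link F x|)%N -> fcount F x 0 = 1%N.
Proof.
rewrite card_gt0 => /set0Pn[B BL].
have set0L : set0 \in link F x := link_hereditary (sub0set B) BL.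
rewrite /fcount (_ : [set A in link F x | #|A| == 0%N] = [set set0]) ?cards1 //.
apply/setP => A; rewrite !inE; apply/andP/eqP.
- by case=> _ /eqP/cards0_eq.
- by move=> ->; rewrite set0L cards0.
Qed.

Lemma fcount2_le_bin : (fcount F x 2 <= 'C(fcount F x 1, 2))%N.
Proof.
set S := [set y | [set y] \in link F x].
have -> : fcount F x 1 = #|S|.
  rewrite /fcount (_ : [set A in link F x | #|A| == 1%N] = [set [set y] | y in S]).
    by rewrite card_imset //; apply: set1_inj.
  apply/setP => A; rewrite inE; apply/andP/imsetP.
  - by case=> AL /cards1P[y Ay]; exists y => //; rewrite inE -Ay.
  - by case=> y; rewrite inE => yS ->; rewrite yS cards1.
rewrite -cards_draws /fcount; apply: subset_leq_card; apply/subsetP => A.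
rewrite !inE => /andP[AL ->]; rewrite andbT; apply/subsetP => y yA.
by rewrite inE; apply: link_hereditary AL; rewrite sub1set.
Qed.

Hypothesis f3 : fcount F x 3 = 0%N.

Lemma link_card_le2 : {in link F x, forall B : {set V}, #|B| <= 2}%N.
Proof.
move=> B BL; rewrite leqNgt; apply/negP => B3.
have : (0 < #|[set C : {set V} | C \subset B & #|C| == 3%N]|)%N.
  by rewrite cards_draws bin_gt0.
rewrite card_gt0 => /set0Pn[C]; rewrite inE => /andP[CB C3].
have : C \in [set A in link F x | #|A| == 3%N].
  by rewrite inE C3 andbT; apply: link_hereditary CB BL.
by move/eqP: f3; rewrite cards_eq0 => /eqP ->; rewrite inE.
Qed.

Lemma card_link_fcount :
  #|link F x| = (fcount F x 0 + fcount F x 1 + fcount F x 2)%N.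
Proof.
rewrite -sum1_card (partition_big_card _ link_card_le2) /=.
by rewrite !big_ord_recr big_ord0 /= !sum1_card add0r.
Qed.

Lemma five_le_fcount1 : (12 <= #|link F x|)%N -> (5 <= fcount F x 1)%N.
Proof.
move=> n12; rewrite leqNgt; apply/negP => f1_le4.
have := leq_bin2l 2 (f1_le4 : fcount F x 1 <= 4)%N.
have := fcount2_le_bin; have := fcount0_link.
rewrite card_link_fcount in n12 *.
rewrite (_ : 'C(4, 2) = 6%N) //; lia.
Qed.

Lemma uweight_fcount :
  uweight F x = (fcount F x 0)%:R + (fcount F x 1)%:R / 2%:R
              + \sum_(B in [set A in link F x | #|A| == 2%N]) omega F x (x |: B).
Proof.
rewrite uweight_link (partition_big_card _ link_card_le2) /=.
rewrite !big_ord_recr big_ord0 /= add0r.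
have sum_small i : (i < 2)%N ->
    \sum_(B in [set A in link F x | #|A| == i]) omega F x (x |: B)
      = (fcount F x i)%:R / i.+1%:R.
  move=> i2; rewrite mulrC mulr_natr -sumr_const.
  apply: eq_bigr => B; rewrite inE => /andP[BL /eqP Bi].
  by rewrite omega_link_small // Bi.
by rewrite (sum_small 0%N) // (sum_small 1%N) // divr1.
Qed.

End Link.

Theorem mainTheorem9 (V : finType) (F : {set {set V}}) (x : V) :
  hereditary F -> minimal12 F -> fcount F x 3 = 0%N ->
  (53%:R / 10%:R <= uweight F x) /\
  (uweight F x = 53%:R / 10%:R <->
     [/\ fcount F x 1 = 5%N, fcount F x 2 = 6%N &
         forall B, B \in link F x -> #|B| = 2%N ->
           omega F x (x |: B) = 6%:R / 20%:R]).
Proof.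
move=> hF [deg_ge12 _] f3.
have n12 : (12 <= #|link F x|)%N := deg_ge12 x.
have f0 : fcount F x 0 = 1%N by apply: fcount0_link => //; lia.
have f1_ge5 := five_le_fcount1 hF f3 n12.
have n12r : 12%:R <= (fcount F x 0 + fcount F x 1 + fcount F x 2)%:R :> rat.
  by rewrite ler_nat -card_link_fcount.
have f1r : 5%:R <= (fcount F x 1)%:R :> rat by rewrite ler_nat.
set P2 := [set A in link F x | #|A| == 2%N].
have card_P2 : #|P2| = fcount F x 2 by [].
have pair_ge : {in P2, forall B, 6%:R / 20%:R <= omega F x (x |: B)}.
  by move=> B; rewrite inE => /andP[BL /eqP]; apply: omega_link_pair_ge.
have S2_ge := ler_sum_const pair_ge.
have u_eq := uweight_fcount hF f3.
rewrite card_P2 -mulr_natr in S2_ge; rewrite f0 in u_eq n12r; rewrite !natrD in n12r.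
split; first lra.
split.
- move=> u53.
  have f1_5 : fcount F x 1 = 5%N by apply/eqP; rewrite -(eqr_nat rat); apply/eqP; lra.
  have f2_6 : fcount F x 2 = 6%N by apply/eqP; rewrite -(eqr_nat rat); apply/eqP; lra.
  split => // B BL B2; apply: (sum_eq_const pair_ge); last by rewrite inE BL B2.
  by rewrite card_P2 -mulr_natr; lra.
- case=> f1_5 f2_6 pairs_eq.
  rewrite u_eq f1_5 (eq_bigr (fun=> 6%:R / 20%:R)); last first.
    by move=> B; rewrite inE => /andP[BL /eqP]; apply: pairs_eq.
  by rewrite sumr_const card_P2 f2_6; lra.
Qed.
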